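(* Let $u$ be a partition with $\omega(u)=n\ge1$ and $d=d(u)$. Define $\Gamma$ by $n+d-2=2(u_1+2u_3+e)+\Gamma$. Then: (i) $\Gamma=-2$ if $\dot n=0$; (ii) $\Gamma=0$ if $\dot n=7\cdot 2^\alpha$ and $u_7=2^\alpha$ for some integer $\alpha\ge0$; (iii) $\Gamma=1$ if $\dot n=2$; (iv) $\Gamma\ge 2$ otherwise.
   Context: A partition is a sequence $u=(u_1,u_2,\dots)$ of nonnegative integers, almost all zero ($u_i$ = number of parts equal to $i$); weight $\omega(u)=\sum_i iu_i$, degree $d(u)=\sum_i u_i$; $\gamma_u=\prod_{i\ge1}(i+1)^{u_i}u_i!$. With $v=v_2$ the $2$-adic valuation, put $e=v(\gamma_u)-v((2u_1)!)-(2u_3+v(u_3!))$ and $\dot n=n-u_1-3u_3$ (equivalently, $\dot n$ is the weight and $e=v(\gamma_{\dot u})$ of the partition $\dot u$ obtained from $u$ by setting $\dot u_1=\dot u_3=0$ and $\dot u_i=u_i$ for $i\ne1,3$). *)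

From mathcomp Require Import all_boot all_order all_algebra.
Set Implicit Arguments. Unset Strict Implicit. Unset Printing Implicit Defensive.
Import Order.TTheory GRing.Theory Num.Theory.

(* A partition u = (u_1, u_2, ...) is represented by a finite sequence
   u : seq nat, with u_i := nth 0 u (i-1) for i >= 1 (entries beyond the
   sequence are 0). *)
Definition part (u : seq nat) (i : nat) : nat := nth 0 u i.-1.

Definition weight (u : seq nat) : nat := \sum_(i < size u) i.+1 * nth 0 u i.

Definition degree (u : seq nat) : nat := \sum_(i < size u) nth 0 u i.

Definition gammap (u : seq nat) : nat :=
  \prod_(i < size u) ((i.+2) ^ (nth 0 u i) * (nth 0 u i)`!).

Definition v2 (m : nat) : nat := logn 2 m.

Definition e_of (u : seq nat) : int :=
  (v2 (gammap u))%:Z - (v2 (part u 1).*2`!)%:Z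
  - ((2 * part u 3)%:Z + (v2 (part u 3)`!)%:Z).

Definition ndot (u : seq nat) : int :=
  (weight u)%:Z - (part u 1)%:Z - (3 * part u 3)%:Z.

Definition Gam (u : seq nat) : int :=
  (weight u)%:Z + (degree u)%:Z - 2
  - 2 * ((part u 1)%:Z + 2 * (part u 3)%:Z + e_of u).

From mathcomp Require Import all_boot all_order all_algebra zify.
Set Implicit Arguments. Unset Strict Implicit.

(* With x_k = u_k, the quantity n + d - 2 v(gamma_u) is the sum over k of
   (k+1) x_k - 2 (x_k v(k+1) + v(x_k!)); since v((2m)!) = m + v(m!), the terms
   k = 1 and k = 3 cancel against the corrections in e, so Gamma + 2 is the sum
   of these terms over the parts of \dot u.  Because v(m!) <= m - 1, with
   equality exactly for powers of 2, and 2 v(c) + 2 <= c for c >= 3, c <> 4,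
   each nonzero term is at least 2, and at least 4 unless (k, x_k) is (2, 1)
   (term 3) or (7, 2^a) (term 2).  Counting the nonzero terms gives the four
   cases. *)

Lemma v2_odd m : odd m -> v2 m = 0.
Proof. by move=> m_odd; apply: logn_coprime; rewrite coprime2n m_odd. Qed.

Lemma v2_double n : 0 < n -> v2 n.*2 = (v2 n).+1.
Proof. by move=> n_gt0; rewrite /v2 -mul2n lognM // (logn_prime 2 isT). Qed.

Lemma v2_fact_double k : v2 (k.*2)`! = k + v2 k`!.
Proof.
elim: k => // k IHk.
rewrite doubleS !factS /v2 !lognM ?muln_gt0 ?fact_gt0 // -!/(v2 _).
rewrite (@v2_odd k.*2.+1) /= ?odd_double // IHk -doubleS v2_double //; lia.
Qed.

Lemma v2_fact_half m : v2 m`! = m./2 + v2 (m./2)`!.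
Proof.
rewrite -{1}(odd_double_half m) -v2_fact_double.
case: (odd m); rewrite ?add1n ?add0n // factS /v2 lognM ?fact_gt0 // -/(v2 _).
by rewrite v2_odd //= odd_double.
Qed.

Lemma v2_fact_le m : v2 m`! <= m.-1.
Proof.
elim/ltn_ind: m => m IHm; rewrite v2_fact_half.
have [h0|h_gt0] := posnP m./2; first by rewrite h0.
have h_lt : m./2 < m by have := odd_double_half m; lia.
have := IHm _ h_lt; lia.
Qed.

Lemma v2_fact_pow2 a : v2 (2 ^ a)`! = (2 ^ a).-1.
Proof.
elim: a => // a IHa.
by rewrite expnS mul2n v2_fact_double IHa; have := expn_gt0 2 a; lia.
Qed.

Lemma v2_fact_eq_pred m : 0 < m -> v2 m`! = m.-1 -> exists a, m = 2 ^ a.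
Proof.
elim/ltn_ind: m => m IHm m_gt0; rewrite v2_fact_half => eq_pred.
have m_eq := odd_double_half m.
have [h0|h_gt0] := posnP m./2; first by exists 0; lia.
have h_lt : m./2 < m by lia.
have h_eq : v2 (m./2)`! = m./2.-1 by have := v2_fact_le m./2; lia.
have [a h_pow] := IHm _ h_lt h_gt0 h_eq.
by exists a.+1; rewrite expnS -h_pow; have := v2_fact_le m./2; lia.
Qed.

Lemma v2_prod (I : Type) (r : seq I) (F : I -> nat) : (forall i, 0 < F i) ->
  v2 (\prod_(i <- r) F i) = \sum_(i <- r) v2 (F i).
Proof.
move=> F_gt0; elim: r => [|i r IHr]; first by rewrite !big_nil.
by rewrite !big_cons /v2 lognM ?F_gt0 ?prodn_gt0 // -IHr.
Qed.

Lemma v2_gammap u :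
  v2 (gammap u) = \sum_(i < size u) (nth 0 u i * v2 i.+2 + v2 (nth 0 u i)`!).
Proof.
rewrite /gammap v2_prod => [|i]; last by rewrite muln_gt0 expn_gt0 fact_gt0.
by apply: eq_bigr => i _; rewrite /v2 lognM ?expn_gt0 ?fact_gt0 // lognX.
Qed.

Lemma double_v2_add4_le c : 4 < c -> c != 8 -> 2 * v2 c + 4 <= c.
Proof.
move=> c_gt4 c_neq8.
have [c_lt16|c_ge16] := ltnP c 16; first by move: c c_lt16 c_gt4 c_neq8; do 16!case=> //.
have [v_lt4|v_ge4] := ltnP (v2 c) 4; first lia.
have exp_le : 2 ^ v2 c <= c by apply: dvdn_leq; [lia | exact: pfactor_dvdnn].
suff : 2 * v2 c + 4 <= 2 ^ v2 c by lia.
elim: (v2 c) v_ge4 => // v IHv v_gt3; rewrite expnS.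
have [->|v_neq3] := eqVneq v 3; first by [].
have v_ge4 : 3 < v by lia.
by have := IHv v_ge4; lia.
Qed.

Lemma double_v2_add2_le c : 2 < c -> c != 4 -> 2 * v2 c + 2 <= c.
Proof.
move=> c_gt2 c_neq4.
have [->|c_neq3] := eqVneq c 3; first by [].
have [->|c_neq8] := eqVneq c 8; first by [].
have c_gt4 : 4 < c by lia.
by have := double_v2_add4_le c_gt4 c_neq8; lia.
Qed.

(* The indices of the parts kept in the partition \dot u; part indices start at 1. *)
Definition dotted (k : nat) : bool := (1 < k) && (k != 3).

(* The contribution of m parts equal to k to n + d - 2 v(gamma_u); for dotted k the
   subtraction never truncates (gamma_termE). *)
Definition gamma_term (k m : nat) : nat := k.+1 * m - 2 * (m * v2 k.+1 + v2 m`!).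

Lemma gamma_term0 k : gamma_term k 0 = 0.
Proof. by rewrite /gamma_term muln0. Qed.

Lemma gamma_term_ge2 k m : dotted k -> 0 < m -> 2 <= gamma_term k m.
Proof.
case/andP=> k_gt1 k_neq3 m_gt0; rewrite /gamma_term.
have coef_le : 2 * v2 k.+1 + 2 <= k.+1 by apply: double_v2_add2_le; lia.
have := v2_fact_le m; nia.
Qed.

Lemma gamma_termE k m : dotted k ->
  gamma_term k m + 2 * (m * v2 k.+1 + v2 m`!) = k.+1 * m.
Proof.
move=> dk; have [->|m_gt0] := posnP m; first by rewrite gamma_term0 muln0.
by have := gamma_term_ge2 dk m_gt0; rewrite /gamma_term; lia.
Qed.

Lemma gamma_term_ge4 k m : dotted k -> 0 < m -> k * m != 2 ->
  ~ (k = 7 /\ exists a, m = 2 ^ a) -> 4 <= gamma_term k m.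
Proof.
case/andP=> k_gt1 k_neq3 m_gt0 km_neq2 not_seven; rewrite /gamma_term.
have fact_le := v2_fact_le m.
have [k2|k_neq2] := eqVneq k 2; first by move: km_neq2; rewrite k2 (v2_odd (isT : odd 3)); lia.
have [k7|k_neq7] := eqVneq k 7.
  have fact_neq : v2 m`! != m.-1.
    by apply/eqP=> /(v2_fact_eq_pred m_gt0) m_exp2; apply: not_seven.
  by rewrite k7 (_ : v2 8 = 3) //; lia.
have coef_le : 2 * v2 k.+1 + 4 <= k.+1 by apply: double_v2_add4_le; lia.
nia.
Qed.

Lemma gamma_term_2_1 : gamma_term 2 1 = 3.
Proof. by []. Qed.

Lemma gamma_term_7_exp2 a : gamma_term 7 (2 ^ a) = 2.
Proof. by rewrite /gamma_term v2_fact_pow2 (_ : v2 8 = 3) //; have := expn_gt0 2 a; lia. Qed.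

(* The range is padded beyond size u so that it always contains 7. *)
Lemma sum_parts_split u (F : nat -> nat -> nat) : (forall k, F k 0 = 0) ->
  \sum_(i < size u) F i.+1 (nth 0 u i) =
  F 1 (part u 1) + F 3 (part u 3)
  + \sum_(1 <= k < size u + 8 | dotted k) F k (part u k).
Proof.
move=> F0.
have -> : \sum_(i < size u) F i.+1 (nth 0 u i) = \sum_(1 <= k < size u + 8) F k (part u k).
  rewrite (big_cat_nat _ (n := (size u).+1)) //=; last lia.
  rewrite [X in _ = _ + X]big1_seq ?addn0 => [|k /andP[_]]; last first.
    by rewrite mem_index_iota /part => /andP[k_gt _]; rewrite nth_default ?F0 //; lia.
  by rewrite big_add1 /= big_mkord.
rewrite (_ : size u + 8 = (size u).+4.+4); last by rewrite -!addSnnS addn0.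
rewrite [in RHS]big_ltn_cond // [in RHS]big_ltn_cond // [in RHS]big_ltn_cond //=.
rewrite [in LHS]big_ltn // [in LHS]big_ltn // [in LHS]big_ltn //.
suff -> : \sum_(4 <= k < (size u).+4.+4 | dotted k) F k (part u k)
        = \sum_(4 <= k < (size u).+4.+4) F k (part u k) by lia.
rewrite big_nat_cond [RHS]big_nat_cond; apply: eq_bigl => k; rewrite andbT.
case: (leqP 4 k) => //= k_ge4.
by rewrite (_ : dotted k) ?andbT //; apply/andP; lia.
Qed.

Section DominatedSums.

Variables (I : eqType) (Q : pred I) (w t : I -> nat).
Hypotheses (t_eq0 : forall i, Q i -> w i = 0 -> t i = 0)
           (t_ge2 : forall i, Q i -> 0 < w i -> 2 <= t i).

Lemma sum_pos_summand s : 0 < \sum_(i <- s | Q i) w i ->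
  exists2 j, j \in s & Q j && (0 < w j).
Proof.
rewrite lt0n sum_nat_seq_neq0 => /hasP[j j_s /andP[Qj wj_neq0]].
by exists j; rewrite // Qj lt0n.
Qed.

Lemma dominated_sum_eq0 s :
  \sum_(i <- s | Q i) w i = 0 -> \sum_(i <- s | Q i) t i = 0.
Proof.
move/eqP; rewrite sum_nat_seq_eq0 => /allP w_eq0.
apply: big1_seq => i /andP[Qi i_s].
by move/implyP: (w_eq0 i i_s) => /(_ Qi)/eqP; apply: t_eq0.
Qed.

Lemma dominated_sum_split s j : j \in s -> Q j ->
  \sum_(i <- s | Q i) t i = t j + \sum_(i <- rem j s | Q i) t i
  /\ \sum_(i <- s | Q i) w i = w j + \sum_(i <- rem j s | Q i) w i.
Proof. by move=> j_s Qj; split; rewrite (big_rem j) // Qj. Qed.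

Lemma dominated_sum_single s j : j \in s -> Q j ->
  \sum_(i <- s | Q i) w i = w j -> \sum_(i <- s | Q i) t i = t j.
Proof.
move=> j_s Qj; have [-> ->] := dominated_sum_split j_s Qj.
by move=> rest_eq0; rewrite dominated_sum_eq0 ?addn0 //; lia.
Qed.

Lemma dominated_sum_ge_add2 s j : j \in s -> Q j ->
  w j < \sum_(i <- s | Q i) w i -> t j + 2 <= \sum_(i <- s | Q i) t i.
Proof.
move=> j_s Qj; have [-> ->] := dominated_sum_split j_s Qj.
rewrite -[ltnLHS]addn0 ltn_add2l leq_add2l => /sum_pos_summand[i i_rem /andP[Qi wi_gt0]].
have [-> _] := dominated_sum_split i_rem Qi.
by have := t_ge2 Qi wi_gt0; lia.
Qed.

End DominatedSums.

Section GammaSums.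

Variables (s : seq nat) (x : nat -> nat).

Local Notation w := (fun k => k * x k).
Local Notation t := (fun k => gamma_term k (x k)).
Local Notation W := (\sum_(k <- s | dotted k) k * x k).
Local Notation T := (\sum_(k <- s | dotted k) gamma_term k (x k)).

Let term_eq0 k : dotted k -> k * x k = 0 -> gamma_term k (x k) = 0.
Proof.
case/andP=> k_gt1 _ /eqP; rewrite muln_eq0 => /orP[/eqP k0|/eqP->].
  by move: k_gt1; rewrite k0.
exact: gamma_term0.
Qed.

Let term_ge2 k : dotted k -> 0 < k * x k -> 2 <= gamma_term k (x k).
Proof. by move=> dk; rewrite muln_gt0 => /andP[_]; exact: gamma_term_ge2. Qed.

Let summand_le j : j \in s -> dotted j -> j * x j <= W.
Proof. by move=> j_s dj; have [_ ->] := dominated_sum_split w t j_s dj; apply: leq_addr. Qed.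

Lemma gamma_sum_eq0 : W = 0 -> T = 0.
Proof. exact: (dominated_sum_eq0 (w := w) (t := t) term_eq0). Qed.

Lemma gamma_sum_seven a : 7 \in s -> W = 7 * 2 ^ a -> x 7 = 2 ^ a -> T = 2.
Proof.
move=> s7 W_eq x7.
rewrite (dominated_sum_single (w := w) (t := t) term_eq0 s7) //; last by rewrite x7.
by rewrite x7 gamma_term_7_exp2.
Qed.

Lemma gamma_sum_two : W = 2 -> T = 3.
Proof.
move=> W_eq; have /sum_pos_summand[j j_s /andP[dj wj_gt0]] : 0 < W by rewrite W_eq.
have := summand_le j_s dj; rewrite W_eq => wj_le.
have xj_gt0 : 0 < x j by move: wj_gt0; rewrite muln_gt0 => /andP[].
have j2 : j = 2 by move: dj => /andP[j_gt1 _]; have := leq_pmulr j xj_gt0; lia.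
have xj1 : x j = 1 by move: wj_le; rewrite {1}j2; lia.
rewrite (dominated_sum_single (w := w) (t := t) term_eq0 j_s dj).
  by rewrite xj1 j2 gamma_term_2_1.
by rewrite W_eq xj1 j2.
Qed.

Lemma gamma_sum_ge4 : W <> 0 -> W <> 2 ->
  ~ (exists a, W = 7 * 2 ^ a /\ x 7 = 2 ^ a) -> 4 <= T.
Proof.
move=> W_neq0 W_neq2 not_seven.
have /sum_pos_summand[j j_s /andP[dj wj_gt0]] : 0 < W by lia.
have [wj_eq|wj_neq] := eqVneq (j * x j) W; last first.
  have wj_lt : j * x j < W by rewrite ltn_neqAle wj_neq summand_le.
  have /= := dominated_sum_ge_add2 term_ge2 j_s dj wj_lt.
  by have := term_ge2 dj wj_gt0; lia.
rewrite (dominated_sum_single (w := w) (t := t) term_eq0 j_s dj) //.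
apply: gamma_term_ge4 => //; first by move: wj_gt0; rewrite muln_gt0 => /andP[].
  by rewrite wj_eq; apply/eqP.
by move=> [j7 [a xj]]; apply: not_seven; exists a; rewrite -wj_eq -j7 xj.
Qed.

End GammaSums.

Local Open Scope ring_scope.

Lemma ndotE u :
  ndot u = (\sum_(1 <= k < size u + 8 | dotted k) k * part u k)%N%:Z.
Proof.
rewrite /ndot /weight (@sum_parts_split u (fun k m => k * m)%N) => [|k]; last by rewrite muln0.
lia.
Qed.

Lemma GamE u :
  Gam u = (\sum_(1 <= k < size u + 8 | dotted k) gamma_term k (part u k))%N%:Z - 2.
Proof.
have /= HW := @sum_parts_split u (fun k m => k * m)%N (fun k => muln0 k).
have /= HD := @sum_parts_split u (fun k m => m) (fun k => erefl).
have /= HV := @sum_parts_split u (fun k m => m * v2 k.+1 + v2 m`!)%N (fun k => erefl).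
have HT : (\sum_(1 <= k < size u + 8 | dotted k) k * part u k
           + \sum_(1 <= k < size u + 8 | dotted k) part u k
         = \sum_(1 <= k < size u + 8 | dotted k) gamma_term k (part u k)
           + 2 * \sum_(1 <= k < size u + 8 | dotted k) (part u k * v2 k.+1 + v2 (part u k)`!))%N.
  rewrite big_distrr -!big_split; apply: eq_bigr => k dk.
  by rewrite /= gamma_termE // mulSn addnC.
have v2_2 : v2 2 = 1%N by [].
have v2_4 : v2 4 = 2%N by [].
rewrite /Gam /e_of /weight /degree HW HD v2_gammap HV v2_fact_double v2_2 v2_4.
lia.
Qed.

Theorem lemma4p6 (u : seq nat) :
  (1 <= weight u)%N ->
  [/\ ndot u = 0 -> Gam u = -2,
      (forall alpha : nat,
         ndot u = (7 * 2 ^ alpha)%N%:Z -> part u 7 = (2 ^ alpha)%N -> Gam u = 0),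
      ndot u = 2 -> Gam u = 1
    & (ndot u <> 0 -> ndot u <> 2 ->
       ~ (exists alpha : nat,
            ndot u = (7 * 2 ^ alpha)%N%:Z /\ part u 7 = (2 ^ alpha)%N) ->
       2 <= Gam u)].
Proof.
(* The empty partition satisfies (i). *)
move=> _; rewrite GamE ndotE.
have s7 : (7 \in index_iota 1 (size u + 8))%N by rewrite mem_index_iota; lia.
split=> [W0 | a W_eq x7 | W2 | W_neq0 W_neq2 not_seven].
- by rewrite gamma_sum_eq0 //; lia.
- by rewrite (gamma_sum_seven s7 _ x7) //; lia.
- by rewrite gamma_sum_two //; lia.
- suff : (4 <= \sum_(1 <= k < size u + 8 | dotted k) gamma_term k (part u k))%N by lia.
  apply: gamma_sum_ge4; [lia | lia |].
  by case=> a [W_eq x7]; apply: not_seven; exists a; split=> //; lia.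
Qed.
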